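(* Let $\mathcal E=\widetilde{\Omega^1_D}(\mathcal A)$ be the bimodule of one-forms of a spectral triple $(\mathcal A,\mathcal H,D)$ and suppose $\mathcal E$ satisfies Assumption III. Endow $\mathcal Z(\mathcal E)\otimes_{\mathcal Z(\mathcal A)}\mathcal A$ with the $\mathcal A$-bimodule structure $b(e\otimes a)c=e\otimes bac$ and $\mathcal A\otimes_{\mathcal Z(\mathcal A)}\mathcal Z(\mathcal E)$ with $b(a\otimes e)c=bac\otimes e$ ($a,b,c\in\mathcal A$, $e\in\mathcal Z(\mathcal E)$). Then there are isomorphisms of $\mathcal A$-$\mathcal A$-bimodules $$\mathcal E\cong\mathcal A\otimes_{\mathcal Z(\mathcal A)}\mathcal Z(\mathcal E)\cong\mathcal Z(\mathcal E)\otimes_{\mathcal Z(\mathcal A)}\mathcal A.$$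
   Context: $\mathcal E$ is the linear span in $B(\mathcal H)$ of $\{a[D,b]:a,b\in\mathcal A\}$, an $\mathcal A$-bimodule. $\mathcal Z(\mathcal E)=\{e:ea=ae\ \forall a\in\mathcal A\}$, $\mathcal Z(\mathcal A)$ the center of $\mathcal A$. Assumption III: $\mathcal Z(\mathcal E)$ is finitely generated and projective over $\mathcal Z(\mathcal A)$, and the map $u^{\mathcal E}:\mathcal Z(\mathcal E)\otimes_{\mathcal Z(\mathcal A)}\mathcal A\to\mathcal E$, $\sum_i e_i\otimes a_i\mapsto\sum_ie_ia_i$, is an isomorphism of vector spaces. *)

From HB Require Import structures.
From mathcomp Require Import all_boot all_algebra.
Set Implicit Arguments. Unset Strict Implicit. Unset Printing Implicit Defensive.
Import GRing.Theory.
Local Open Scope ring_scope.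

(* Abstract setting: B plays the role of B(H) (a unital ring), A a unital
   subring, delta : B -> B plays the role of b |-> [D,b] (only its values on A
   matter). *)
Section OneForms.
Variable B : nzRingType.

Definition one_forms (A : {pred B}) (delta : B -> B) (x : B) : Prop :=
  exists s : seq (B * B),
    (forall p, p \in s -> (p.1 \in A) /\ (p.2 \in A)) /\
    x = \sum_(p <- s) p.1 * delta p.2.

Definition center_alg (A : {pred B}) (z : B) : Prop :=
  z \in A /\ forall a, a \in A -> z * a = a * z.

Definition center_bimod (A : {pred B}) (E : B -> Prop) (e : B) : Prop :=
  E e /\ forall a, a \in A -> e * a = a * e.

Definition balanced_map (M Z N : B -> Prop) (W : zmodType) (f : B -> B -> W)
  : Prop :=
  [/\ forall m m' n, M m -> M m' -> N n -> f (m + m') n = f m n + f m' n,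
      forall m n n', M m -> N n -> N n' -> f m (n + n') = f m n + f m n'
    & forall m z n, M m -> Z z -> N n -> f (m * z) n = f m (z * n)].

Definition additive_map (U W : zmodType) (g : U -> W) : Prop :=
  forall x y, g (x + y) = g x + g y.

Definition is_tensor_product (M Z N : B -> Prop) (T : zmodType)
  (tau : B -> B -> T) : Prop :=
  balanced_map M Z N tau /\
  forall (W : zmodType) (f : B -> B -> W), balanced_map M Z N f ->
    (exists g : T -> W, additive_map g /\
        forall m n, M m -> N n -> g (tau m n) = f m n) /\
    (forall g1 g2 : T -> W, additive_map g1 -> additive_map g2 ->
        (forall m n, M m -> N n -> g1 (tau m n) = g2 (tau m n)) ->
        forall t, g1 t = g2 t).

(* M is a finitely generated projective Z-module (action z . m = z * m):
   a retract of a free module Z^n of finite rank *)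
Definition fg_projective (Z M : B -> Prop) : Prop :=
  exists (n : nat) (p : B -> 'I_n -> B) (s : ('I_n -> B) -> B),
    [/\ forall x i, M x -> Z (p x i),
        forall x y i, M x -> M y -> p (x + y) i = p x i + p y i,
        forall z x i, Z z -> M x -> p (z * x) i = z * p x i
      & forall v, (forall i, Z (v i)) -> M (s v)] /\
    [/\
        forall v w, (forall i, Z (v i)) -> (forall i, Z (w i)) ->
          s (fun i => v i + w i) = s v + s w,
        forall z v, Z z -> (forall i, Z (v i)) -> s (fun i => z * v i) = z * s v
      & forall x, M x -> s (p x) = x].

Definition additive_actions (A : {pred B}) (T : zmodType)
  (l : B -> T -> T) (r : T -> B -> T) : Prop :=
  (forall b, b \in A -> additive_map (l b)) /\
  (forall c, c \in A -> additive_map (fun t => r t c)).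

Definition bimodule_iso (A : {pred B}) (E : B -> Prop) (T : zmodType)
  (l : B -> T -> T) (r : T -> B -> T) (phi : B -> T) : Prop :=
  [/\ forall x y, E x -> E y -> phi (x + y) = phi x + phi y,
      forall b x, b \in A -> E x -> phi (b * x) = l b (phi x),
      forall x c, c \in A -> E x -> phi (x * c) = r (phi x) c,
      forall x y, E x -> E y -> phi x = phi y -> x = y
    & forall t, exists x, E x /\ phi x = t].

End OneForms.

(* The map u^E of Assumption III intertwines the actions b (e (x) a) c = e (x) bac
   with multiplication in B, because central one-forms commute with A; hence its
   inverse is a bimodule isomorphism E ~ Z(E) (x) A.  Since Z(A) commutes with A and
   with Z(E), the flip e (x) a |-> a (x) e is balanced in both directions and gives
   Z(E) (x) A ~ A (x) Z(E), again compatible with the actions. *)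

From HB Require Import structures.
From Stdlib Require Import ClassicalEpsilon.
From mathcomp Require Import all_boot all_algebra.
Set Implicit Arguments.
Unset Strict Implicit.
Unset Printing Implicit Defensive.
Import GRing.Theory.
Local Open Scope ring_scope.

Section TensorProducts.
Variable B : nzRingType.

Lemma tensor_product_ext (M Z N : B -> Prop) (T W : zmodType)
    (tau : B -> B -> T) (g1 g2 : T -> W) :
  is_tensor_product M Z N tau -> additive_map g1 -> additive_map g2 ->
  (forall m n, M m -> N n -> g1 (tau m n) = g2 (tau m n)) -> g1 =1 g2.
Proof.
case=> _ univ; have bal0 : balanced_map M Z N (fun _ _ => 0 : W).
  by split=> *; rewrite ?addr0.
exact: (univ W _ bal0).2.
Qed.

Lemma tensor_intertwine (M Z N : B -> Prop) (T W : zmodType)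
    (tau : B -> B -> T) (l : T -> T) (l' : W -> W) (f : T -> W) :
  is_tensor_product M Z N tau ->
  additive_map l -> additive_map l' -> additive_map f ->
  (forall m n, M m -> N n -> f (l (tau m n)) = l' (f (tau m n))) ->
  forall t, f (l t) = l' (f t).
Proof.
move=> tens ladd l'add fadd.
apply: (tensor_product_ext (g1 := f \o l) (g2 := l' \o f) tens) => x y /=.
- by rewrite ladd fadd.
- by rewrite fadd l'add.
Qed.

Lemma balanced_flip (M Z N : B -> Prop) (W : zmodType) (f : B -> B -> W) :
  (forall m z, M m -> Z z -> m * z = z * m) ->
  (forall n z, N n -> Z z -> n * z = z * n) ->
  balanced_map M Z N f -> balanced_map N Z M (fun n m => f m n).
Proof.
move=> MZ NZ [fDl fDr fZ]; split=> [n n' m|n m m'|n z m Nn Zz Mm] *.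
- exact: fDr.
- exact: fDl.
by rewrite NZ // -(MZ m z) // fZ.
Qed.

Lemma tensor_product_flip (M Z N : B -> Prop) (T1 T2 : zmodType)
    (tau1 : B -> B -> T1) (tau2 : B -> B -> T2) :
  (forall m z, M m -> Z z -> m * z = z * m) ->
  (forall n z, N n -> Z z -> n * z = z * n) ->
  is_tensor_product M Z N tau1 -> is_tensor_product N Z M tau2 ->
  exists g : T1 -> T2, [/\ additive_map g, bijective g
    & forall m n, M m -> N n -> g (tau1 m n) = tau2 n m].
Proof.
move=> MZ NZ tens1 tens2.
have [[g [gadd gtau]] _] := tens1.2 T2 _ (balanced_flip NZ MZ tens2.1).
have [[h [hadd htau]] _] := tens2.2 T1 _ (balanced_flip MZ NZ tens1.1).
exists g; split=> //; exists h.
- apply: (tensor_product_ext (g2 := id) tens1) => // [x y|m n Mm Nn].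
    by rewrite gadd hadd.
  by rewrite gtau // htau.
- apply: (tensor_product_ext (g2 := id) tens2) => // [x y|n m Nn Mm].
    by rewrite hadd gadd.
  by rewrite htau // gtau.
Qed.

End TensorProducts.

Section BimoduleIsomorphisms.
Variables (B : nzRingType) (A : {pred B}) (E : B -> Prop).

Lemma bimodule_iso_inverse (T : zmodType) (l : B -> T -> T) (r : T -> B -> T)
    (u : T -> B) :
  additive_map u -> injective u -> (forall x, E x <-> exists t, u t = x) ->
  (forall b t, b \in A -> u (l b t) = b * u t) ->
  (forall c t, c \in A -> u (r t c) = u t * c) ->
  exists psi : B -> T, bimodule_iso A E l r psi.
Proof.
move=> uadd uinj imE uL uR.
pose psi x := epsilon (inhabits 0) (fun t => u t = x).
have psiK x : E x -> u (psi x) = x by move/imE; apply: epsilon_spec.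
have Eu t : E (u t) by apply/imE; exists t.
exists psi; split=> [x y Ex Ey|b x Ab Ex|x c Ac Ex|x y Ex Ey psi_xy|t].
- apply: uinj; rewrite uadd !psiK //.
  by rewrite -(psiK x) // -(psiK y) // -uadd.
- by apply: uinj; rewrite uL // !psiK // -(psiK x) // -uL.
- by apply: uinj; rewrite uR // !psiK // -(psiK x) // -uR.
- by rewrite -(psiK x) // -(psiK y) // psi_xy.
- by exists (u t); split=> //; apply: uinj; rewrite psiK.
Qed.

Lemma bimodule_iso_comp (T T' : zmodType) (l : B -> T -> T) (r : T -> B -> T)
    (l' : B -> T' -> T') (r' : T' -> B -> T') (phi : B -> T) (g : T -> T') :
  bimodule_iso A E l r phi -> additive_map g -> bijective g ->
  (forall b t, b \in A -> g (l b t) = l' b (g t)) ->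
  (forall c t, c \in A -> g (r t c) = r' (g t) c) ->
  bimodule_iso A E l' r' (g \o phi).
Proof.
move=> [phiD phiL phiR phi_inj phi_surj] gadd [h gK hK] gL gR.
split=> [x y Ex Ey|b x Ab Ex|x c Ac Ex|x y Ex Ey /= gphi_xy|t] /=.
- by rewrite phiD // gadd.
- by rewrite phiL // gL.
- by rewrite phiR // gR.
- by apply: phi_inj => //; apply: (can_inj gK).
- by have [x [Ex phix]] := phi_surj (h t); exists x; rewrite phix hK.
Qed.

End BimoduleIsomorphisms.

Theorem proposition4p13 (B : nzRingType) (A : {pred B}) (delta : B -> B)
  (A_subring : subring_closed A)
  (delta_Leibniz : forall a b, a \in A -> b \in A ->
      delta (a * b) = a * delta b + delta a * b)
  (* T1 = Z(E) (x)_{Z(A)} A, with b (e (x) a) c = e (x) bac *)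
  (T1 : zmodType) (tau1 : B -> B -> T1) (l1 : B -> T1 -> T1) (r1 : T1 -> B -> T1)
  (T1_tensor : is_tensor_product
      (center_bimod A (one_forms A delta)) (center_alg A) (fun a => a \in A)
      tau1)
  (T1_act : additive_actions A l1 r1)
  (T1_l : forall b e a, b \in A -> center_bimod A (one_forms A delta) e ->
      a \in A -> l1 b (tau1 e a) = tau1 e (b * a))
  (T1_r : forall e a c, c \in A -> center_bimod A (one_forms A delta) e ->
      a \in A -> r1 (tau1 e a) c = tau1 e (a * c))
  (* T2 = A (x)_{Z(A)} Z(E), with b (a (x) e) c = bac (x) e *)
  (T2 : zmodType) (tau2 : B -> B -> T2) (l2 : B -> T2 -> T2) (r2 : T2 -> B -> T2)
  (T2_tensor : is_tensor_product
      (fun a => a \in A) (center_alg A) (center_bimod A (one_forms A delta))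
      tau2)
  (T2_act : additive_actions A l2 r2)
  (T2_l : forall b a e, b \in A -> a \in A ->
      center_bimod A (one_forms A delta) e ->
      l2 b (tau2 a e) = tau2 (b * a) e)
  (T2_r : forall a e c, c \in A -> a \in A ->
      center_bimod A (one_forms A delta) e ->
      r2 (tau2 a e) c = tau2 (a * c) e)
  (* Assumption III *)
  (fgp : fg_projective (center_alg A) (center_bimod A (one_forms A delta)))
  (uE_iso : exists u : T1 -> B, [/\ additive_map u,
      forall e a, center_bimod A (one_forms A delta) e -> a \in A ->
        u (tau1 e a) = e * a,
      injective u
    & forall x, one_forms A delta x <-> exists t, u t = x]) :
  (exists phi : B -> T2, bimodule_iso A (one_forms A delta) l2 r2 phi) /\
  (exists psi : B -> T1, bimodule_iso A (one_forms A delta) l1 r1 psi).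
Proof.
have [_ _ mulA] := A_subring.
have [[l1D r1D] [l2D r2D]] := (T1_act, T2_act).
have [u [uD utau u_inj imE]] := uE_iso.
have [psi psi_iso] : exists psi, bimodule_iso A (one_forms A delta) l1 r1 psi.
  apply: (bimodule_iso_inverse uD u_inj imE) => [b|c] t Ac.
  - apply: (tensor_intertwine (l' := fun x => b * x) T1_tensor (l1D b Ac) _ uD).
      exact: mulrDr.
    by move=> e a Ee Aa; rewrite T1_l // !utau ?mulA // mulrA Ee.2 // mulrA.
  - apply: (tensor_intertwine (l' := fun x => x * c) T1_tensor (r1D c Ac) _ uD).
      by move=> x y; rewrite mulrDl.
    by move=> e a Ee Aa; rewrite /= T1_r // !utau ?mulA // mulrA.
have [g [gD g_bij gtau]] : exists g : T1 -> T2, [/\ additive_map g, bijective g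
    & forall e a, center_bimod A (one_forms A delta) e -> a \in A ->
        g (tau1 e a) = tau2 a e].
  apply: tensor_product_flip T1_tensor T2_tensor => [e z [_ eA] [Az _]|a z Aa [_ zA]].
  - exact: eA.
  - by rewrite zA.
split; last by exists psi.
exists (g \o psi); apply: (bimodule_iso_comp psi_iso gD g_bij) => [b|c] t Ac.
- apply: (tensor_intertwine T1_tensor (l1D b Ac) (l2D b Ac) gD) => e a Ee Aa.
  by rewrite T1_l // !gtau ?mulA // T2_l.
- apply: (tensor_intertwine T1_tensor (r1D c Ac) (r2D c Ac) gD) => e a Ee Aa.
  by rewrite /= T1_r // !gtau ?mulA // T2_r.
Qed.
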